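(* Let $(|B(\lambda)\rangle,\mathcal{M})$ be an $N$-regular quantum scenario with $M_3=\{C_0,C_1\}$. It is a paradox if and only if $\delta(\lambda,C_0)$ and $\delta(\lambda,C_1)$ are each congruent modulo $2\pi$ to an even multiple of $\frac{\pi}{N}$ and $\beta(\lambda,C_0)-\beta(\lambda,C_1)$ is congruent modulo $2\pi$ to an odd multiple of $\frac{\pi}{N}$.
   Context: $\equiv$ is equality modulo $2\pi$; $\oplus$ is addition mod 2. For $\varphi\in\mathbb{R}$, $E_\varphi=\cos\varphi X+\sin\varphi Y$, with $+1$ eigenvector $|\varphi\rangle=\frac{1}{\sqrt2}(|0\rangle+e^{i\varphi}|1\rangle)$ and $-1$ eigenvector $|\varphi+\pi\rangle$; outcomes $+1,-1$ relabelled $0,1$; measurements identified with angles. A measurement scenario $\mathcal{M}=(M_1,M_2,M_3)$ consists of finite sets $M_i\subseteq[0,\pi)$ of angles for qubit $i$; contexts are triples in $M_1\times M_2\times M_3$. For a three-qubit state $|\psi\rangle$, the event $(A,B,C)\to(a,b,c)$ is impossible if $(\langle A+a\pi|\otimes\langle B+b\pi|\otimes\langle C+c\pi|)|\psi\rangle=0$; $(|\psi\rangle,\mathcal{M})$ is a paradox if for every assignment $g$ of outcomes in $\{0,1\}$ to all measurements of $M_1,M_2,M_3$ (as disjoint sets) some context $(A,B,C)$ has $(A,B,C)\to(g(A),g(B),g(C))$ impossible. For $\lambda\in[0,\frac{\pi}{2})$, $|v_\lambda\rangle=\cos\frac{\lambda}{2}|0\rangle+\sin\frac{\lambda}{2}|1\rangle$,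 $|w_\lambda\rangle=\sin\frac{\lambda}{2}|0\rangle+\cos\frac{\lambda}{2}|1\rangle$, $|B(\lambda)\rangle=\frac{1}{\sqrt2}(|00\rangle|v_\lambda\rangle+|11\rangle|w_\lambda\rangle)$. Define modulo $2\pi$: $\beta(\lambda,\varphi)=\varphi-2\arctan\left(\frac{\cos\frac{\lambda}{2}\sin\varphi}{\sin\frac{\lambda}{2}+\cos\frac{\lambda}{2}\cos\varphi}\right)$ and $\delta(\lambda,\varphi)=\beta(\lambda,\varphi+\pi)-\beta(\lambda,\varphi)$. For $|B(\lambda)\rangle$, $(A,B,C)\to(a,b,c)$ is impossible iff $A+B\equiv\beta(\lambda,C+c\pi)+(1\oplus a\oplus b)\pi$. $(|B(\lambda)\rangle,\mathcal{M})$ is maximally impossible if for every $C\in M_3$ and $z\in\{0,1\}$: every $A\in M_1$ admits $B\in M_2$, $a,b$ with $(A,B,C)\to(a,b,z)$ impossible, and every $B\in M_2$ admits $A\in M_1$, $a,b$ with $(A,B,C)\to(a,b,z)$ impossible. Then $|M_1|=|M_2|=:N$; write $M_1=\{A_0,\dots,A_{N-1}\}$, $M_2=\{B_0,\dots,B_{N-1}\}$, $M_3=\{C_0,\dots,C_{n-1}\}$; for each $(j,l,z)$ there is a unique $k=:K(j,l,z)$ with $A_j+B_k-\beta(\lambda,C_l+z\pi)$ an integer multiple of $\pi$, and $r(j,l,z)\in\{0,1\}$ is defined by $A_j+B_{K(j,l,z)}-\beta(\lambda,C_l+z\pi)\equiv r(j,l,z)\pi$. $\Psi_l(z)$ is the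 $\mathbb{Z}_2$-linear system $\{a_j\oplus b_{K(j,l,z)}=r(j,l,z):j=0,\dots,N-1\}$. With $n=2$, maximal rank means for all $z_0,z_1$ the coefficient matrix of $\Psi_0(z_0)\cup\Psi_1(z_1)$ has rank $2N-1$ over $\mathbb{Z}_2$. $N$-regular: maximally impossible and of maximal rank, with $|M_1|=|M_2|=N$ and $M_3=\{C_0,C_1\}$. *)

From mathcomp Require Import all_boot all_algebra.
From Stdlib Require Import Reals ZArith.

Set Implicit Arguments.
Unset Strict Implicit.
Unset Printing Implicit Defensive.

Local Open Scope R_scope.

Definition eqm2pi (x y : R) : Prop := exists k : Z, x - y = 2 * PI * IZR k.

Definition int_mult_pi (x : R) : Prop := exists k : Z, x = PI * IZR k.

Definition bitR (b : bool) : R := if b then 1 else 0.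

(** When the denominator vanishes the arctangent argument is ±∞ and
    2·arctan(±∞) = ±π ≡ π (mod 2π); we use this (continuous) value. *)
Definition beta (lam phi : R) : R :=
  let den := sin (lam / 2) + cos (lam / 2) * cos phi in
  if Req_EM_T den 0 then phi - PI
  else phi - 2 * atan (cos (lam / 2) * sin phi / den).

Definition delta (lam phi : R) : R := beta lam (phi + PI) - beta lam phi.

Definition cplx := (R * R)%type.
Definition cadd (z w : cplx) : cplx := (fst z + fst w, snd z + snd w).
Definition cmul (z w : cplx) : cplx :=
  (fst z * fst w - snd z * snd w, fst z * snd w + snd z * fst w).
Definition cconj (z : cplx) : cplx := (fst z, - snd z).
Definition creal (r : R) : cplx := (r, 0).
Definition cexpi (phi : R) : cplx := (cos phi, sin phi).
Definition csum2 (f : bool -> cplx) : cplx := cadd (f false) (f true).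

(** |φ> = (|0> + e^{iφ}|1>)/√2, components indexed by bool (false = |0>). *)
Definition ket (phi : R) (x : bool) : cplx :=
  if x then cmul (creal (/ sqrt 2)) (cexpi phi) else creal (/ sqrt 2).

Definition state3 := bool -> bool -> bool -> cplx.

Definition vlam (lam : R) (z : bool) : R :=
  if z then sin (lam / 2) else cos (lam / 2).
Definition wlam (lam : R) (z : bool) : R :=
  if z then cos (lam / 2) else sin (lam / 2).
Definition Bstate (lam : R) : state3 := fun x y z =>
  match x, y with
  | false, false => creal (/ sqrt 2 * vlam lam z)
  | true, true => creal (/ sqrt 2 * wlam lam z)
  | _, _ => creal 0
  end.

(** (<A+aπ| ⊗ <B+bπ| ⊗ <C+cπ|) |ψ> *)
Definition amplitude (psi : state3) (A B C : R) (a b c : bool) : cplx :=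
  csum2 (fun x => csum2 (fun y => csum2 (fun z =>
    cmul (cconj (ket (A + bitR a * PI) x))
      (cmul (cconj (ket (B + bitR b * PI) y))
        (cmul (cconj (ket (C + bitR c * PI) z)) (psi x y z)))))).

Definition impossible (psi : state3) (A B C : R) (a b c : bool) : Prop :=
  amplitude psi A B C a b c = creal 0.

Definition paradox (psi : state3) (M1 M2 M3 : R -> Prop) : Prop :=
  forall g1 g2 g3 : R -> bool,
    exists A B C, M1 A /\ M2 B /\ M3 C /\
      impossible psi A B C (g1 A) (g2 B) (g3 C).

Definition maximally_impossible (lam : R) (M1 M2 M3 : R -> Prop) : Prop :=
  forall C (z : bool), M3 C ->
    (forall A, M1 A -> exists B a b, M2 B /\ impossible (Bstate lam) A B C a b z) /\
    (forall B, M2 B -> exists A a b, M1 A /\ impossible (Bstate lam) A B C a b z).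

Definition rangeP (N : nat) (f : 'I_N -> R) : R -> Prop :=
  fun x => exists j, x = f j.

Definition pairP (C0 C1 : R) : R -> Prop := fun x => x = C0 \/ x = C1.

Definition is_K (lam : R) (N : nat) (A B : 'I_N -> R) (C : R) (z : bool)
  (K : 'I_N -> 'I_N) : Prop :=
  forall j, int_mult_pi (A j + B (K j) - beta lam (C + bitR z * PI)).

(** Coefficient matrix over Z_2 of Ψ_0(z0) ∪ Ψ_1(z1), variables
    (a_0..a_{N-1}, b_0..b_{N-1}); row j of block l is a_j ⊕ b_{K_l j}. *)
Definition bitF (b : bool) : 'F_2 := if b then (@GRing.one _) else (@GRing.zero _).

Definition coef_mx (N : nat) (K0 K1 : 'I_N -> 'I_N) : 'M['F_2]_(N + N, N + N) :=
  \matrix_(i < N + N, c < N + N)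
    match fintype.split i with
    | inl j => GRing.add (bitF (c == lshift N j)) (bitF (c == rshift N (K0 j)))
    | inr j => GRing.add (bitF (c == lshift N j)) (bitF (c == rshift N (K1 j)))
    end.

(** maximal rank: rank 2N - 1 (as an integer, i.e. rank + 1 = 2N) *)
Definition maximal_rank (lam : R) (N : nat) (A B : 'I_N -> R) (C0 C1 : R) : Prop :=
  forall (z0 z1 : bool) (K0 K1 : 'I_N -> 'I_N),
    is_K lam A B C0 z0 K0 -> is_K lam A B C1 z1 K1 ->
    ((\rank (coef_mx K0 K1)).+1 = N + N)%nat.

Definition angle_ok (x : R) : Prop := 0 <= x < PI.

Definition N_regular (lam : R) (N : nat) (A B : 'I_N -> R) (C0 C1 : R) : Prop :=
  maximally_impossible lam (rangeP A) (rangeP B) (pairP C0 C1) /\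
  maximal_rank lam A B C0 C1.

(* For |B(λ)>, the event (A,B,C) -> (a,b,c) is impossible iff
   A + B - β(λ, C + cπ) = kπ with k ≡ 1 + a + b (mod 2).  Since all angles lie in
   [0, π), each target C_l + zπ matches every A_j with a unique B_(K j), K a
   permutation, and an integer k_j.  An outcome assignment avoids every impossible
   event iff, for z_l the outcome of C_l, it solves the Z_2 system
   a_j + b_(K0 j) = k0_j, a_j + b_(K1 j) = k1_j.  Every column of its coefficient
   matrix sums to 0 and its rank is 2N - 1, so the all-ones vector spans the left
   kernel and the system is solvable iff Σ_j k0_j ≡ Σ_j k1_j (mod 2).  Summing the
   matching relations gives π Σ_j k_j = Σ A + Σ B - N β, so the paradox condition
   (the two parities differ for all four choices of z0, z1) says exactly that
   N δ(λ, C_0) / π and N δ(λ, C_1) / π are even integers and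
   N (β(λ, C_0) - β(λ, C_1)) / π is an odd one. *)

From HB Require Import structures.
From mathcomp Require Import all_boot all_algebra.
From Stdlib Require Import Reals ZArith Lra Lia Classical.
Import GRing.Theory.

Set Implicit Arguments.
Unset Strict Implicit.
Unset Printing Implicit Defensive.

Section F2LinearSystems.
Local Open Scope ring_scope.

Lemma exists_mulmx_eq_iff_sum0 (F : fieldType) m n (M : 'M[F]_(m, n)) (r : 'cV[F]_m) :
  (forall c, \sum_i M i c = 0) -> (\rank M).+1 = m ->
  (exists x, M *m x = r) <-> \sum_i r i 0 = 0.
Proof.
move=> sumM0 rkM.
have m_gt0 : (0 < m)%nat by rewrite -rkM.
set ones : 'cV[F]_m := const_mx 1.
have sub_ker_ones p (X : 'M[F]_(p, m)) :
    (X <= kermx ones)%MS = [forall k, \sum_i X k i == 0].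
  have Xones k : (X *m ones) k 0 = \sum_i X k i.
    by rewrite mxE; apply: eq_bigr => i _; rewrite mxE mulr1.
  rewrite sub_kermx; apply/eqP/forallP => [/matrixP X0 k | X0].
    by rewrite -Xones X0 mxE.
  by apply/matrixP => k l; rewrite ord1 Xones mxE; exact/eqP.
have rk_ones : \rank ones = 1%nat.
  apply/eqP; rewrite eqn_leq rank_leq_col lt0n mxrank_eq0.
  apply/eqP => /matrixP/(_ (Ordinal m_gt0) 0); rewrite !mxE; exact/eqP/oner_neq0.
have MT_ker : (M^T == kermx ones)%MS.
  have MT_sub : (M^T <= kermx ones)%MS.
    by rewrite sub_ker_ones; apply/forallP => c; under eq_bigr do rewrite mxE; rewrite sumM0.
  rewrite MT_sub -(mxrank_leqif_sup MT_sub).2 mxrank_ker rk_ones mxrank_tr.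
  by rewrite -[X in (X - 1)%nat]rkM subn1 eqxx.
have -> : (exists x, M *m x = r) <-> (r^T <= M^T)%MS.
  split=> [[x <-]|/submxP[D rD]]; first by rewrite trmx_mul submxMl.
  by exists D^T; rewrite -[r]trmxK rD trmx_mul trmxK.
rewrite (eqmxP MT_ker) sub_ker_ones.
split=> [/forallP/(_ 0)/eqP | r0]; first by under eq_bigr do rewrite mxE.
by apply/forallP => k; rewrite ord1; under eq_bigr do rewrite mxE; rewrite r0.
Qed.

Lemma bitF_addb a b : bitF (a (+) b) = bitF a + bitF b.
Proof. by case: a; case: b; apply/val_inj. Qed.

Lemma bitF_inj : injective bitF.
Proof. by case; case => // /(congr1 val). Qed.

Lemma bitF_eq1 (y : 'F_2) : bitF (y == 1) = y.
Proof. by case: y => [[|[|]]] //= ?; apply/val_inj. Qed.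

Lemma bitF_big_addb N (r : 'I_N -> bool) :
  bitF (\big[addb/false]_j r j) = \sum_j bitF (r j).
Proof. exact: (big_morph bitF bitF_addb). Qed.

Section CoefMx.
Variables (N : nat) (K0 K1 : 'I_N -> 'I_N).

Lemma coef_mx_lshift j c :
  coef_mx K0 K1 (lshift N j) c = bitF (c == lshift N j) + bitF (c == rshift N (K0 j)).
Proof. by rewrite mxE (unsplitK (inl j)). Qed.

Lemma coef_mx_rshift j c :
  coef_mx K0 K1 (rshift N j) c = bitF (c == lshift N j) + bitF (c == rshift N (K1 j)).
Proof. by rewrite mxE (unsplitK (inr j)). Qed.

Lemma sum_coef_mx_col : injective K0 -> injective K1 ->
  forall c, \sum_i coef_mx K0 K1 i c = 0.
Proof.
move=> K0_inj K1_inj c.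
rewrite big_split_ord /=.
under eq_bigr do rewrite coef_mx_lshift.
under [X in _ + X]eq_bigr do rewrite coef_mx_rshift.
rewrite !big_split /=.
rewrite -(reindex_inj (P := xpredT) (F := fun k => bitF (c == rshift N k)) K0_inj).
rewrite -(reindex_inj (P := xpredT) (F := fun k => bitF (c == rshift N k)) K1_inj).
by rewrite addrACA !addrr_pchar2 ?addr0 // pchar_Fp.
Qed.

Lemma sum_bitF_pick (T : finType) (p : T) (f : T -> 'F_2) :
  \sum_c bitF (c == p) * f c = f p.
Proof.
rewrite (bigD1 p) //= eqxx mul1r big1 ?addr0 // => i /negbTE ->.
exact: mul0r.
Qed.

Lemma coef_mxM_lshift (x : 'cV['F_2]_(N + N)) j :
  (coef_mx K0 K1 *m x) (lshift N j) 0 = x (lshift N j) 0 + x (rshift N (K0 j)) 0.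
Proof.
rewrite mxE; under eq_bigr do rewrite coef_mx_lshift mulrDl.
by rewrite big_split /= !sum_bitF_pick.
Qed.

Lemma coef_mxM_rshift (x : 'cV['F_2]_(N + N)) j :
  (coef_mx K0 K1 *m x) (rshift N j) 0 = x (lshift N j) 0 + x (rshift N (K1 j)) 0.
Proof.
rewrite mxE; under eq_bigr do rewrite coef_mx_rshift mulrDl.
by rewrite big_split /= !sum_bitF_pick.
Qed.

Lemma xor_system_mulmx (r0 r1 : 'I_N -> bool) :
  (exists a b : 'I_N -> bool, forall j,
      a j (+) b (K0 j) = r0 j /\ a j (+) b (K1 j) = r1 j)
  <-> exists x, coef_mx K0 K1 *m x = col_mx (\col_j bitF (r0 j)) (\col_j bitF (r1 j)).
Proof.
split=> [[a [b sol]] | [x sol]].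
- exists (col_mx (\col_j bitF (a j)) (\col_k bitF (b k))).
  apply/matrixP => i k; rewrite ord1 -(splitK i).
  case: (fintype.split i) => j /=.
  + rewrite coef_mxM_lshift !col_mxEu col_mxEd !mxE -bitF_addb.
    by case: (sol j) => -> _.
  + rewrite coef_mxM_rshift !col_mxEd col_mxEu !mxE -bitF_addb.
    by case: (sol j) => _ ->.
- exists (fun j => x (lshift N j) 0 == 1), (fun k => x (rshift N k) 0 == 1) => j.
  split; apply: bitF_inj; rewrite bitF_addb !bitF_eq1.
  + by rewrite -coef_mxM_lshift sol col_mxEu mxE.
  + by rewrite -coef_mxM_rshift sol col_mxEd mxE.
Qed.

Lemma xor_system_solvable (r0 r1 : 'I_N -> bool) :
  injective K0 -> injective K1 -> (\rank (coef_mx K0 K1)).+1 = (N + N)%nat ->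
  (exists a b : 'I_N -> bool, forall j,
      a j (+) b (K0 j) = r0 j /\ a j (+) b (K1 j) = r1 j)
  <-> \big[addb/false]_j r0 j = \big[addb/false]_j r1 j.
Proof.
move=> K0_inj K1_inj rk.
rewrite xor_system_mulmx exists_mulmx_eq_iff_sum0 //; last exact: sum_coef_mx_col.
rewrite big_split_ord /=.
under eq_bigr do rewrite col_mxEu mxE.
under [X in _ + X]eq_bigr do rewrite col_mxEd mxE.
rewrite -!bitF_big_addb -bitF_addb.
rewrite -[0]/(bitF false).
by split=> [/bitF_inj/negbT | ->]; rewrite ?negb_add ?addbb // => /eqP.
Qed.

End CoefMx.

End F2LinearSystems.

Local Open Scope R_scope.

Lemma cos_eq_m1 x : cos x = -1 <-> exists k : Z, x = PI + 2 * PI * IZR k.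
Proof.
split=> [cx | [k ->]].
- have c2 : 2 * cos (x / 2) * cos (x / 2) - 1 = -1.
    by rewrite -cos_2a_cos -cx; congr cos; field.
  have [k xk] := cos_eq_0_0 (x / 2) ltac:(nra).
  by exists k; lra.
- have c0 : cos (IZR k * PI + PI / 2) = 0 by apply: cos_eq_0_1; exists k.
  replace (PI + 2 * PI * IZR k) with (2 * (IZR k * PI + PI / 2)) by field.
  by rewrite cos_2a_cos c0; ring.
Qed.

Lemma cos_opp_sin_eq_iff a g :
  cos g = - cos a /\ sin g = sin a <-> exists k : Z, a + g = PI + 2 * PI * IZR k.
Proof.
rewrite -cos_eq_m1 cos_plus; split=> [[-> ->] | c1].
  by have := sin2_cos2 a; rewrite /Rsqr; lra.
have := sin2_cos2 a; have := sin2_cos2 g; rewrite /Rsqr => sc_g sc_a.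
have sq0 : (cos a + cos g) ^ 2 + (sin a - sin g) ^ 2 = 0 by nra.
have := pow2_ge_0 (cos a + cos g); have := pow2_ge_0 (sin a - sin g).
by split; nra.
Qed.


Lemma beta_polar lam phi : 0 <= lam < PI / 2 ->
  exists rho psi, rho <> 0 /\
    sin (lam / 2) + cos (lam / 2) * cos phi = rho * cos psi /\
    cos (lam / 2) * sin phi = rho * sin psi /\
    beta lam phi = phi - 2 * psi.
Proof.
move=> lam_range.
set s := sin (lam / 2); set c := cos (lam / 2).
have sin_lam_lt1 : sin lam < 1.
  by rewrite -sin_PI2; apply: sin_increasing_1; lra.
have sin_lam_ge0 : 0 <= sin lam by apply: sin_ge_0; lra.
have sin_lamE : sin lam = 2 * s * c by rewrite /s /c -sin_2a; congr sin; field.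
have sc1 : s * s + c * c = 1 by have := sin2_cos2 (lam / 2).
have := COS_bound phi; have := sin2_cos2 phi; rewrite /Rsqr => sc_phi cos_phi_bd.
have norm_gt0 : 0 < (s + c * cos phi) ^ 2 + (c * sin phi) ^ 2.
  have -> : (s + c * cos phi) ^ 2 + (c * sin phi) ^ 2 = 1 + sin lam * cos phi.
    by rewrite sin_lamE -sc1 -[c * c in RHS]Rmult_1_r -sc_phi; ring.
  by nra.
rewrite /beta -/s -/c.
case: Req_EM_T => [den0 | den_neq0]; cbn [is_left].
- exists (c * sin phi), (PI / 2); rewrite cos_PI2 sin_PI2.
  split; last by split; [|split]; lra.
  by move=> num0; rewrite den0 num0 in norm_gt0; lra.
- set t := c * sin phi / (s + c * cos phi).
  have sqrt_gt0 : 0 < sqrt (1 + t²) by apply: sqrt_lt_R0; have := Rle_0_sqr t; lra.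
  exists ((s + c * cos phi) * sqrt (1 + t²)), (atan t).
  rewrite cos_atan sin_atan /t in sqrt_gt0 *.
  split; first by apply: Rmult_integral_contrapositive; split; lra.
  by split; [|split]; [field; lra | field; lra | ring].
Qed.

Lemma amplitude_Bstate lam x y C a b c :
  let q := / sqrt 2 in
  let s := sin (lam / 2) in let cc := cos (lam / 2) in
  let phi := C + bitR c * PI in
  let th := x + bitR a * PI + (y + bitR b * PI) in
  amplitude (Bstate lam) x y C a b c =
  (q ^ 4 * (cc + s * cos phi + cos th * (s + cc * cos phi) - sin th * (cc * sin phi)),
   q ^ 4 * (- (s * sin phi) - cos th * (cc * sin phi) - sin th * (s + cc * cos phi))).
Proof.
move=> q s cc phi th.
rewrite /th; set A' := x + bitR a * PI; set B' := y + bitR b * PI.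
rewrite cos_plus sin_plus.
rewrite /amplitude /csum2 /cadd /cmul /cconj /ket /creal /cexpi /Bstate /vlam /wlam /=.
by rewrite -/q -/phi -/s -/cc -/A' -/B'; f_equal; ring.
Qed.

Lemma impossible_Bstate_iff lam x y C a b c : 0 <= lam < PI / 2 ->
  impossible (Bstate lam) x y C a b c <->
  exists k : Z, x + bitR a * PI + (y + bitR b * PI) - beta lam (C + bitR c * PI)
                = PI + 2 * PI * IZR k.
Proof.
move=> lam_range; rewrite /impossible amplitude_Bstate /creal.
set q := / sqrt 2; set phi := C + bitR c * PI; set th := x + _ + _.
(* with s + c e^(iφ) = ρ e^(iψ), the amplitude is q^4 ρ (e^(i(ψ - φ)) + e^(-i(θ + ψ))) *)
have [rho [psi [rho_neq0 [rho_cos [rho_sin ->]]]]] := beta_polar phi lam_range.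
set s := sin (lam / 2) in rho_cos rho_sin *; set cc := cos (lam / 2) in rho_cos rho_sin *.
have sc_phi := sin2_cos2 phi; rewrite /Rsqr in sc_phi.
have reE : cc + s * cos phi + cos th * (s + cc * cos phi) - sin th * (cc * sin phi)
           = rho * (cos (psi - phi) + cos (th + psi)).
  transitivity (cos phi * (rho * cos psi) + sin phi * (rho * sin psi)
                + cos th * (rho * cos psi) - sin th * (rho * sin psi)).
    by rewrite -rho_cos -rho_sin -[X in X + _ + _ - _]Rmult_1_r -sc_phi; ring.
  by rewrite cos_minus cos_plus; ring.
have imE : - (s * sin phi) - cos th * (cc * sin phi) - sin th * (s + cc * cos phi)
           = rho * (sin (psi - phi) - sin (th + psi)).
  transitivity (cos phi * (rho * sin psi) - sin phi * (rho * cos psi)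
                - cos th * (rho * sin psi) - sin th * (rho * cos psi)).
    by rewrite -rho_cos -rho_sin; ring.
  by rewrite sin_minus sin_plus; ring.
have q4_neq0 : q ^ 4 <> 0.
  by apply/pow_nonzero/Rinv_neq_0_compat/Rgt_not_eq/sqrt_lt_R0; lra.
have scaled_eq0 u : q ^ 4 * (rho * u) = 0 <-> u = 0.
  split=> [|->]; last by ring.
  by move/Rmult_integral => [|/Rmult_integral []].
have -> : th - (phi - 2 * psi) = (th + psi) + (psi - phi) by ring.
rewrite reE imE -cos_opp_sin_eq_iff; split.
- by case=> /scaled_eq0 re0 /scaled_eq0 im0; split; lra.
- by case=> cosE sinE; rewrite cosE sinE; f_equal; ring.
Qed.

Lemma odd_multiple_pi_shift (t : R) (a b : bool) :
  (exists k : Z, t + (bitR a + bitR b) * PI = PI + 2 * PI * IZR k) <->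
  exists k : Z, t = PI * IZR k /\ Z.odd k = ~~ (a (+) b).
Proof.
rewrite (_ : bitR a + bitR b = IZR (Z.b2z a + Z.b2z b)); last by case: a; case: b => /=; ring.
split=> [[k tE] | [k [tE k_odd]]].
- exists (1 + 2 * k - (Z.b2z a + Z.b2z b))%Z; split.
    by rewrite minus_IZR plus_IZR mult_IZR; lra.
  by rewrite Z.odd_sub Z.odd_add Z.odd_mul; case: (a); case: (b).
- have /Z.odd_spec [m mE] : Z.odd (k + (Z.b2z a + Z.b2z b)) = true.
    by rewrite !Z.odd_add k_odd; case: (a); case: (b).
  exists m; rewrite tE; transitivity (PI * IZR (k + (Z.b2z a + Z.b2z b))).
    by rewrite !plus_IZR; ring.
  by rewrite mE plus_IZR mult_IZR; ring.
Qed.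

Lemma impossible_Bstate_parity lam x y C a b c : 0 <= lam < PI / 2 ->
  impossible (Bstate lam) x y C a b c <->
  exists k : Z, x + y - beta lam (C + bitR c * PI) = PI * IZR k /\
                Z.odd k = ~~ (a (+) b).
Proof.
move=> lam_range; rewrite impossible_Bstate_iff // -odd_multiple_pi_shift.
set be := beta lam _.
by have -> : x + bitR a * PI + (y + bitR b * PI) - be
             = x + y - be + (bitR a + bitR b) * PI by ring.
Qed.

Lemma angle_ok_sub_pi_multiple y1 y2 k :
  angle_ok y1 -> angle_ok y2 -> y1 - y2 = PI * IZR k -> k = 0%Z.
Proof.
rewrite /angle_ok => y1_ok y2_ok yE.
have pi_gt0 := PI_RGT_0.
have k_gt : (-1 < k)%Z by apply: lt_IZR; nra.
have k_lt : (k < 1)%Z by apply: lt_IZR; nra.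
lia.
Qed.

Lemma eqm2pi_scaled_gap (d u : R) (t : Z) (n : nat) :
  (0 < n)%nat -> PI * IZR t = INR n * d ->
  eqm2pi d (u * PI / INR n) <-> exists k : Z, IZR t = u + 2 * IZR (k * Z.of_nat n).
Proof.
move=> n_gt0 tE.
have n_neq0 : INR n <> 0 by apply: not_0_INR => n0; rewrite n0 in n_gt0.
have pi_gt0 := PI_RGT_0.
have dE : d = PI * IZR t / INR n by rewrite tE; field.
rewrite /eqm2pi dE; split=> [[k kE] | [k kE]]; exists k; rewrite mult_IZR -INR_IZR_INZ in kE *.
- apply: (Rmult_eq_reg_l (PI / INR n)).
    rewrite Rmult_plus_distr_l (_ : PI / INR n * (2 * (IZR k * INR n)) = 2 * PI * IZR k).
      by lra.
    by field.
  by apply: Rmult_integral_contrapositive; split; [lra | exact: Rinv_neq_0_compat].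
- by rewrite kE; field.
Qed.

Lemma odd_eq_iff_even_gap (d : R) (t0 t1 : Z) (n : nat) :
  (0 < n)%nat -> PI * IZR (t0 - t1) = INR n * d ->
  Z.odd t0 = Z.odd t1 <-> exists m : Z, eqm2pi d (2 * IZR m * PI / INR n).
Proof.
move=> n_gt0 tE.
have gap m := eqm2pi_scaled_gap (2 * IZR m) n_gt0 tE.
have -> : Z.odd t0 = Z.odd t1 <-> Z.odd (t0 - t1) = false.
  by rewrite Z.odd_sub; case: (Z.odd t0); case: (Z.odd t1).
split=> [odd0 | [m /gap [k kE]]].
- have /Z.even_spec [m mE] : Z.even (t0 - t1) = true by rewrite -Z.negb_odd odd0.
  by exists m; apply/gap; exists 0%Z; rewrite mE mult_IZR /=; ring.
- have -> : (t0 - t1 = 2 * (m + k * Z.of_nat n))%Z.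
    by apply: eq_IZR; rewrite kE !(plus_IZR, mult_IZR); ring.
  by rewrite Z.odd_mul.
Qed.

Lemma odd_neq_iff_odd_gap (d : R) (t0 t1 : Z) (n : nat) :
  (0 < n)%nat -> PI * IZR (t0 - t1) = INR n * d ->
  Z.odd t0 != Z.odd t1 <-> exists m : Z, eqm2pi d ((2 * IZR m + 1) * PI / INR n).
Proof.
move=> n_gt0 tE.
have gap m := eqm2pi_scaled_gap (2 * IZR m + 1) n_gt0 tE.
have -> : Z.odd t0 != Z.odd t1 <-> Z.odd (t0 - t1) = true.
  by rewrite Z.odd_sub; case: (Z.odd t0); case: (Z.odd t1).
split=> [/Z.odd_spec [m mE] | [m /gap [k kE]]].
- by exists m; apply/gap; exists 0%Z; rewrite mE plus_IZR mult_IZR /=; ring.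
- have -> : (t0 - t1 = 2 * (m + k * Z.of_nat n) + 1)%Z.
    by apply: eq_IZR; rewrite kE !(plus_IZR, mult_IZR); ring.
  by rewrite Z.odd_add Z.odd_mul.
Qed.

Lemma forall2_neq_bool (f g : bool -> bool) :
  (forall z0 z1, f z0 != g z1) <->
  f false = f true /\ g false = g true /\ f false != g false.
Proof.
split=> [neq | [f_const [g_const fg]] z0 z1].
  move: (neq false false) (neq true false) (neq false true) (neq true true).
  by case: (f false) (f true) (g false) (g true) => [] [] [] [].
by case: z0; case: z1; rewrite -?f_const -?g_const.
Qed.

HB.instance Definition _ :=
  Monoid.isComLaw.Build Z 0%Z Z.add Z.add_assoc Z.add_comm Z.add_0_l.
HB.instance Definition _ :=
  Monoid.isComLaw.Build R 0 Rplus
    (fun x y z => esym (Rplus_assoc x y z)) Rplus_comm Rplus_0_l.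

Lemma odd_big_Zadd N (k : 'I_N -> Z) :
  Z.odd (\big[Z.add/0%Z]_j k j) = \big[addb/false]_j Z.odd (k j).
Proof.
apply: big_morph => // x y.
by rewrite Z.odd_add; case: (Z.odd x); case: (Z.odd y).
Qed.

Lemma sum_const_R N (c : R) : \big[Rplus/0]_(j < N) c = INR N * c.
Proof.
elim: N => [|n IHn]; first by rewrite big_ord0 /=; ring.
by rewrite big_ord_recr IHn S_INR /=; ring.
Qed.

Lemma paradoxE psi M1 M2 M3 :
  paradox psi M1 M2 M3 <->
  ~ exists g1 g2 g3, forall x y C, M1 x -> M2 y -> M3 C ->
      ~ impossible psi x y C (g1 x) (g2 y) (g3 C).
Proof.
split=> [par [g1 [g2 [g3 consistent]]] | no_consistent g1 g2 g3].
  by have [x [y [C [M1x [M2y [M3C imp]]]]]] := par g1 g2 g3; exact: consistent imp.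
apply: NNPP => no_imp; apply: no_consistent; exists g1, g2, g3 => x y C M1x M2y M3C imp.
by apply: no_imp; exists x, y, C.
Qed.

Lemma exists_extension N (f : 'I_N -> R) (v : 'I_N -> bool) :
  injective f -> exists g : R -> bool, forall j, g (f j) = v j.
Proof.
move=> f_inj; exists (fun x => if [pick j | Req_EM_T (f j) x] is Some j then v j else false).
move=> j; case: pickP => [i | /(_ j)]; case: Req_EM_T => // fij _.
by rewrite (f_inj _ _ fij).
Qed.

(* [K] and the parities of [k] are the paper's K(., l, z) and r(., l, z) when
   [be] = β(λ, C_l + zπ). *)
Definition pi_matching {N : nat} (A B : 'I_N -> R) (be : R) (K : 'I_N -> 'I_N) (k : 'I_N -> Z) :=
  forall j, A j + B (K j) - be = PI * IZR (k j).

Section Scenario.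
Variables (lam : R) (N : nat) (A B : 'I_N -> R).
Hypothesis lam_range : 0 <= lam < PI / 2.
Hypotheses (A_inj : injective A) (B_inj : injective B).
Hypotheses (A_ok : forall j, angle_ok (A j)) (B_ok : forall j, angle_ok (B j)).

Lemma exists_pi_matching (T : finType) (be : T -> R) :
  (forall t j, exists i, int_mult_pi (A j + B i - be t)) ->
  exists K k, forall t, pi_matching A B (be t) (K t) (k t).
Proof.
move=> ex_i.
have /fin_all_exists [K HK] : forall tj : T * 'I_N, exists i, int_mult_pi (A tj.2 + B i - be tj.1).
  by case=> t j; exact: ex_i.
have /fin_all_exists [k Hk] := HK.
by exists (fun t j => K (t, j)), (fun t j => k (t, j)) => t j; exact: Hk (t, j).
Qed.

Lemma maximally_impossible_matching M3 C :
  maximally_impossible lam (rangeP A) (rangeP B) M3 -> M3 C ->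
  forall z j, exists i, int_mult_pi (A j + B i - beta lam (C + bitR z * PI)).
Proof.
move=> max_imp M3C z j.
have [/(_ (A j) (ex_intro _ j erefl)) [_ [a [b [[i ->] imp]]]] _] := max_imp C z M3C.
move: imp; rewrite impossible_Bstate_parity // => -[k [kE _]].
by exists i, k.
Qed.

Lemma pi_matching_is_K C z K k :
  pi_matching A B (beta lam (C + bitR z * PI)) K k -> is_K lam A B C z K.
Proof. by move=> m j; exists (k j); exact: m. Qed.

Lemma pi_matching_inj be K k : pi_matching A B be K k -> injective K.
Proof.
move=> m j1 j2 Kj; apply: A_inj.
have Adiff : A j1 - A j2 = PI * IZR (k j1 - k j2).
  by have := m j1; have := m j2; rewrite Kj minus_IZR; lra.
have k0 := angle_ok_sub_pi_multiple (A_ok j1) (A_ok j2) Adiff.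
by rewrite k0 Rmult_0_r in Adiff; lra.
Qed.

Lemma impossible_pi_matching C z K k j i a b :
  pi_matching A B (beta lam (C + bitR z * PI)) K k ->
  impossible (Bstate lam) (A j) (B i) C a b z <-> i = K j /\ a (+) b = ~~ Z.odd (k j).
Proof.
move=> m; rewrite impossible_Bstate_parity //.
split=> [[k' [k'E k'_odd]] | [-> ab]]; last by exists (k j); rewrite ab negbK.
have Bdiff : B i - B (K j) = PI * IZR (k' - k j).
  by have := m j; rewrite minus_IZR; lra.
have k0 := angle_ok_sub_pi_multiple (B_ok i) (B_ok (K j)) Bdiff.
have -> : k j = k' by lia.
split; last by rewrite k'_odd negbK.
by apply: B_inj; rewrite k0 Rmult_0_r in Bdiff; lra.
Qed.

Lemma avoids_pi_matching C z K k (g1 g2 : 'I_N -> bool) :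
  pi_matching A B (beta lam (C + bitR z * PI)) K k ->
  (forall j i, ~ impossible (Bstate lam) (A j) (B i) C (g1 j) (g2 i) z) <->
  forall j, g1 j (+) g2 (K j) = Z.odd (k j).
Proof.
move=> m; split=> [avoid j | sol j i].
  apply/eqP/contraT => neq; case: (avoid j (K j)).
  by apply/(impossible_pi_matching _ _ _ _ m); split=> //; move: neq; case: (_ (+) _); case: (Z.odd _).
by rewrite (impossible_pi_matching _ _ _ _ m) => -[-> ab]; move: (sol j); rewrite ab; case: (Z.odd _).
Qed.

Lemma pi_matching_sum be K k : pi_matching A B be K k ->
  PI * IZR (\big[Z.add/0%Z]_j k j) = \big[Rplus/0]_j A j + \big[Rplus/0]_j B j - INR N * be.
Proof.
move=> m.
rewrite (big_morph (fun x => PI * IZR x) (id1 := 0) (op1 := Rplus)); first last.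
- exact: Rmult_0_r.
- by move=> x y; rewrite plus_IZR; ring.
under eq_bigr do rewrite -m /Rminus.
rewrite !big_split /= sum_const_R.
have BK : \big[Rplus/0]_j B (K j) = \big[Rplus/0]_j B j.
  exact: esym (reindex_inj (pi_matching_inj m)).
by rewrite BK -Ropp_mult_distr_r.
Qed.

Lemma pi_matching_sum_sub be be' K K' k k' :
  pi_matching A B be K k -> pi_matching A B be' K' k' ->
  PI * IZR (\big[Z.add/0%Z]_j k j - \big[Z.add/0%Z]_j k' j) = INR N * (be' - be).
Proof.
move=> m m'.
by rewrite minus_IZR Rmult_minus_distr_l (pi_matching_sum m) (pi_matching_sum m'); ring.
Qed.

Variables (C0 C1 : R) (K0 K1 : bool -> 'I_N -> 'I_N) (k0 k1 : bool -> 'I_N -> Z).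
Hypothesis C01 : C0 <> C1.
Hypothesis match0 : forall z, pi_matching A B (beta lam (C0 + bitR z * PI)) (K0 z) (k0 z).
Hypothesis match1 : forall z, pi_matching A B (beta lam (C1 + bitR z * PI)) (K1 z) (k1 z).

Lemma consistent_assignment_iff :
  (exists g1 g2 g3, forall x y C, rangeP A x -> rangeP B y -> pairP C0 C1 C ->
      ~ impossible (Bstate lam) x y C (g1 x) (g2 y) (g3 C))
  <-> exists z0 z1 (a b : 'I_N -> bool), forall j,
      a j (+) b (K0 z0 j) = Z.odd (k0 z0 j) /\ a j (+) b (K1 z1 j) = Z.odd (k1 z1 j).
Proof.
split=> [[g1 [g2 [g3 consistent]]] | [z0 [z1 [a [b sol]]]]].
  exists (g3 C0), (g3 C1), (g1 \o A), (g2 \o B) => j; split; move: j.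
  - apply/(avoids_pi_matching (g1 \o A) (g2 \o B) (match0 _)) => j i.
    by apply: consistent; [exists j | exists i | left].
  - apply/(avoids_pi_matching (g1 \o A) (g2 \o B) (match1 _)) => j i.
    by apply: consistent; [exists j | exists i | right].
have [g1 g1A] := exists_extension a A_inj.
have [g2 g2B] := exists_extension b B_inj.
exists g1, g2, (fun C => if Req_EM_T C C0 then z0 else z1) => _ _ C [j ->] [i ->].
rewrite g1A g2B => -[-> | ->]; case: Req_EM_T => [C10 | C10] //.
- by move: j i; apply/(avoids_pi_matching a b (match0 z0)) => j; case: (sol j).
- by case: C01.
- by move: j i; apply/(avoids_pi_matching a b (match1 z1)) => j; case: (sol j).
Qed.

Lemma paradox_iff_parity :
  (forall z0 z1, (\rank (coef_mx (K0 z0) (K1 z1))).+1 = (N + N)%nat) ->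
  paradox (Bstate lam) (rangeP A) (rangeP B) (pairP C0 C1) <->
  forall z0 z1, Z.odd (\big[Z.add/0%Z]_j k0 z0 j) != Z.odd (\big[Z.add/0%Z]_j k1 z1 j).
Proof.
move=> rk; rewrite paradoxE consistent_assignment_iff.
have solvable z0 z1 := xor_system_solvable (fun j => Z.odd (k0 z0 j)) (fun j => Z.odd (k1 z1 j))
  (pi_matching_inj (match0 z0)) (pi_matching_inj (match1 z1)) (rk z0 z1).
split=> [no_sol z0 z1 | neq [z0 [z1 sol]]].
  rewrite !odd_big_Zadd; apply/eqP => /(solvable z0 z1).2 sol.
  by apply: no_sol; exists z0, z1.
by move: (neq z0 z1); rewrite !odd_big_Zadd ((solvable z0 z1).1 sol) eqxx.
Qed.

End Scenario.

Theorem lemma19 (lam : R) (N : nat) (A B : 'I_N -> R) (C0 C1 : R) :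
  (0 <= lam < PI / 2)%R ->
  injective A -> injective B -> C0 <> C1 ->
  (forall j, angle_ok (A j)) -> (forall j, angle_ok (B j)) ->
  angle_ok C0 -> angle_ok C1 ->
  N_regular lam A B C0 C1 ->
  (paradox (Bstate lam) (rangeP A) (rangeP B) (pairP C0 C1) <->
   ((exists m : Z, eqm2pi (delta lam C0) (2 * IZR m * PI / INR N)) /\
    (exists m : Z, eqm2pi (delta lam C1) (2 * IZR m * PI / INR N)) /\
    (exists m : Z, eqm2pi (beta lam C0 - beta lam C1)
                          ((2 * IZR m + 1) * PI / INR N)))%R).
Proof.
move=> lam_range A_inj B_inj C01 A_ok B_ok _ _ [max_imp max_rank].
have [K0 [k0 match0]] := exists_pi_matching
  (maximally_impossible_matching lam_range max_imp (or_introl erefl : pairP C0 C1 C0)).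
have [K1 [k1 match1]] := exists_pi_matching
  (maximally_impossible_matching lam_range max_imp (or_intror erefl : pairP C0 C1 C1)).
have rk z0 z1 :=
  max_rank z0 z1 _ _ (pi_matching_is_K (match0 z0)) (pi_matching_is_K (match1 z1)).
have N_gt0 : (0 < N)%nat.
  have : (0 < N + N)%nat by rewrite -(rk false false).
  by rewrite addn_gt0 orbb.
have C_shift C : C + bitR false * PI = C /\ C + bitR true * PI = C + PI.
  by rewrite /bitR; split; ring.
have delta0 := pi_matching_sum_sub A_inj A_ok (match0 false) (match0 true).
have delta1 := pi_matching_sum_sub A_inj A_ok (match1 false) (match1 true).
have beta01 := pi_matching_sum_sub A_inj A_ok (match1 false) (match0 false).
rewrite !(proj1 (C_shift _)) !(proj2 (C_shift _)) -!/(delta lam _) in delta0 delta1 beta01.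
rewrite (paradox_iff_parity lam_range A_inj B_inj A_ok B_ok C01 match0 match1 rk).
rewrite forall2_neq_bool eq_sym.
by rewrite (odd_eq_iff_even_gap N_gt0 delta0) (odd_eq_iff_even_gap N_gt0 delta1)
  (odd_neq_iff_odd_gap N_gt0 beta01).
Qed.
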